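(* Let $f:(k+1)^V\to\mathbb{R}$ be $k$-submodular with multilinear extension $F$, and let $e_{i,j}\in\mathbb{R}^{n\times k}$ denote the standard basis vector with a $1$ in coordinate $(i,j)$. Then: (1) for every $x\in\mathcal P$ and every direction $d\in\mathbb{R}^{n\times k}$ with $d\ge 0$, the function $t\mapsto F(x+td)$ is concave on $\{t: x+td\in\mathcal P\}$; (2) for every $x\in\mathcal P$ and all $i_1\neq i_2\in[n]$, $j_1,j_2\in[k]$, the function $t\mapsto F(x+t(e_{i_1,j_1}-e_{i_2,j_2}))$ is convex on $\{t: x+t(e_{i_1,j_1}-e_{i_2,j_2})\in\mathcal P\}$; (3) for all $i\in[n]$, $j\in[k]$, $\partial F/\partial x_{i,j}$ does not depend on the coordinates $x_{i,1},\dots,x_{i,k}$ (it is constant when all $x_{i',j'}$ with $i'\neq i$ are fixed); (4) if $x,y\in\mathcal P$ with $x\le y$ entrywise, then $\frac{\partial F}{\partial x_{i,j}}(x)\ge\frac{\partial F}{\partial x_{i,j}}(y)$ for all $i\in[n]$, $j\in[k]$.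
   Context: Let $V=[n]=\{1,\dots,n\}$ and let $k\ge 1$ be an integer. Write $(k+1)^V$ for the set of $k$-tuples $S=(S_1,\dots,S_k)$ of pairwise disjoint subsets of $V$. For $S,T\in(k+1)^V$ let $S\sqcap T=(S_1\cap T_1,\dots,S_k\cap T_k)$ and let $S\sqcup T$ be the tuple whose $j$-th component is $(S_j\cup T_j)\setminus\bigcup_{l\neq j}(S_l\cup T_l)$. A function $f:(k+1)^V\to\mathbb{R}$ is $k$-submodular if $f(S)+f(T)\ge f(S\sqcap T)+f(S\sqcup T)$ for all $S,T\in(k+1)^V$. Let $\mathcal P=\{x\in[0,1]^{n\times k}:\sum_{j=1}^k x_{i,j}\le 1\ \forall i\in[n]\}$. The multilinear extension of $f$ is the polynomial $F(x)=\sum_{S\in(k+1)^V} f(S_1,\dots,S_k)\Big(\prod_{j\in[k]}\prod_{i\in S_j}x_{i,j}\Big)\prod_{i\in V\setminus\bigcup_j S_j}\Big(1-\sum_{j=1}^k x_{i,j}\Big)$, considered on $\mathcal P$. *)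

From HB Require Import structures.
From mathcomp Require Import all_boot all_order all_algebra.
From mathcomp Require Import all_classical all_reals.
From mathcomp Require Import topology normedtype derive.
Set Implicit Arguments. Unset Strict Implicit. Unset Printing Implicit Defensive.
Import Order.TTheory GRing.Theory Num.Theory numFieldNormedType.Exports.
Local Open Scope ring_scope.

(* Elements of (k+1)^V, V = 'I_n, are k-tuples S = (S_1,...,S_k) of subsets
   of V that are pairwise disjoint. *)
Definition ktuple (n k : nat) := {ffun 'I_k -> {set 'I_n}}.

Definition pw_disjoint (n k : nat) (S : ktuple n k) : bool :=
  [forall j1 : 'I_k, forall j2 : 'I_k,
     (j1 != j2) ==> [disjoint S j1 & S j2]].

Definition kmeet (n k : nat) (S T : ktuple n k) : ktuple n k :=
  [ffun j => S j :&: T j].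

Definition kjoin (n k : nat) (S T : ktuple n k) : ktuple n k :=
  [ffun j => (S j :|: T j) :\: \bigcup_(l < k | l != j) (S l :|: T l)].

(* k-submodularity (only the values on pairwise-disjoint tuples matter). *)
Definition k_submodular (R : realType) (n k : nat) (f : ktuple n k -> R) : Prop :=
  forall S T : ktuple n k, pw_disjoint S -> pw_disjoint T ->
    f (kmeet S T) + f (kjoin S T) <= f S + f T.

Definition inP (R : realType) (n k : nat) (x : 'M[R]_(n, k)) : Prop :=
  (forall i j, 0 <= x i j <= 1) /\ (forall i, \sum_(j < k) x i j <= 1).

Definition multilinF (R : realType) (n k : nat) (f : ktuple n k -> R)
    (x : 'M[R]_(n, k)) : R :=
  \sum_(S : ktuple n k | pw_disjoint S)
     f S * (\prod_(j < k) \prod_(i in S j) x i j)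
         * \prod_(i < n | i \notin \bigcup_(j < k) S j) (1 - \sum_(j < k) x i j).

Definition partialF (R : realType) (n k : nat) (f : ktuple n k -> R)
    (i : 'I_n) (j : 'I_k) (x : 'M[R]_(n, k)) : R :=
  derive1 (fun t : R => multilinF f (x + t *: delta_mx i j)) 0.

Definition concave_on (R : realType) (D : R -> Prop) (g : R -> R) : Prop :=
  forall a b l : R, D a -> D b -> 0 <= l <= 1 ->
    (1 - l) * g a + l * g b <= g ((1 - l) * a + l * b).

Definition convex_on (R : realType) (D : R -> Prop) (g : R -> R) : Prop :=
  forall a b l : R, D a -> D b -> 0 <= l <= 1 ->
    g ((1 - l) * a + l * b) <= (1 - l) * g a + l * g b.

From HB Require Import structures.
From mathcomp Require Import all_boot all_order all_algebra.
From mathcomp Require Import all_classical all_reals.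
From mathcomp Require Import topology normedtype derive.
From mathcomp Require Import ring lra.
Import Order.TTheory GRing.Theory Num.Theory numFieldNormedType.Exports.
Local Open Scope ring_scope.
Set Implicit Arguments. Unset Strict Implicit. Unset Printing Implicit Defensive.

(* A pairwise-disjoint k-tuple S is the same thing as a labeling
   s : V -> option [k] (s i = Some j iff i lies in S_j), and under this
   bijection F(x) = sum_s f(s) prod_i w_{s i}(x_i), where the row weight
   w_j(x_i) = x_{i,j} and w_None(x_i) = 1 - sum_j x_{i,j}.  Hence F is affine
   in each row x_i:  F(x) = A_i(x) + sum_j x_{i,j} B_{i,j}(x), with A_i, B_{i,j}
   independent of row i, and B_{i,j} is itself the multilinear extension of
   the marginal gain  s |-> f(s[i := j]) - f(s[i := None]).
   k-submodularity makes every marginal gain antitone for the order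
   "s is obtained from t by erasing labels"; telescoping row by row, the
   extension of an antitone function is antitone on feasible points, and a
   row-slope of it is nonpositive.  The four claims follow:
   (3) B_{i,j} ignores row i; (4) the gradient B_{i,j} is antitone;
   (1) along d >= 0 the slopes of chords decrease, hence concavity;
   (2) along e_{i1,j1} - e_{i2,j2}, F is a quadratic in t whose leading
   coefficient is minus a row-slope of a gain, hence convexity. *)

Section Labelings.
Variables (n k : nat).
Local Notation labeling := {ffun 'I_n -> option 'I_k}.

Definition relabel (s : labeling) (m : 'I_n) (c : option 'I_k) : labeling :=
  [ffun i => if i == m then c else s i].

Lemma relabelE s m c i : relabel s m c i = if i == m then c else s i.
Proof. by rewrite ffunE. Qed.

Lemma relabel_relabel s m c c' : relabel (relabel s m c) m c' = relabel s m c'.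
Proof. by apply/ffunP => i; rewrite !relabelE; case: (i == m). Qed.

Lemma relabel_id s m : relabel s m (s m) = s.
Proof. by apply/ffunP => i; rewrite relabelE; case: eqP => [->|]. Qed.

Lemma relabel_same s m c : relabel s m c m = c.
Proof. by rewrite relabelE eqxx. Qed.

Definition toK (s : labeling) : ktuple n k := [ffun j => [set i | s i == Some j]].
Definition ofK (S : ktuple n k) : labeling := [ffun i => [pick j | i \in S j]].

Lemma toKE s j i : (i \in toK s j) = (s i == Some j).
Proof. by rewrite ffunE inE. Qed.

Lemma toK_disjoint s : pw_disjoint (toK s).
Proof.
apply/forallP => j1; apply/forallP => j2; apply/implyP => ne.
rewrite disjoint_subset; apply/fintype.subsetP => i; rewrite !inE !toKE => /eqP ->.
by apply: contra ne => /eqP [] ->.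
Qed.

Lemma ofK_toK s : ofK (toK s) = s.
Proof.
apply/ffunP => i; rewrite ffunE; case: pickP => [j|none].
  by rewrite toKE => /eqP.
by case E: (s i) => [j|] //; move: (none j); rewrite toKE E eqxx.
Qed.

Lemma toK_ofK S : pw_disjoint S -> toK (ofK S) = S.
Proof.
move=> dS; apply/ffunP => j; apply/setP => i; rewrite toKE ffunE.
case: pickP => [j' ij'|none]; last by rewrite none.
case: (eqVneq j' j) => [<-|ne]; first by rewrite eqxx ij'.
have : [disjoint S j' & S j].
  by move/forallP: dS => /(_ j') /forallP /(_ j) /implyP; apply.
move/disjointFr => /(_ _ ij') ->.
by apply/negbTE; apply: contra ne => /eqP [] ->.
Qed.

Definition sublabel (s t : labeling) := forall i, s i = None \/ s i = t i.

Lemma kmeet_kjoin_relabel (s t : labeling) m j : sublabel s t -> t m = None ->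
  kmeet (toK (relabel s m (Some j))) (toK t) = toK s /\
  kjoin (toK (relabel s m (Some j))) (toK t) = toK (relabel t m (Some j)).
Proof.
move=> le tm; have sm : s m = None by case: (le m) => ->.
split.
  apply/ffunP => l; apply/setP => i; rewrite ffunE inE !toKE relabelE.
  case: (eqVneq i m) => [->|ne]; first by rewrite tm sm andbF.
  by case: (le i) => ->; rewrite ?andbb.
set u := relabel t m (Some j).
have union_u l : toK (relabel s m (Some j)) l :|: toK t l = toK u l.
  apply/setP => i; rewrite inE !toKE !relabelE.
  case: (eqVneq i m) => [->|ne]; first by rewrite tm orbF.
  by case: (le i) => ->; rewrite ?orbb.
apply/ffunP => l; rewrite /kjoin ffunE union_u.
under eq_bigr do rewrite union_u.
apply/setP => i; rewrite inE.
case: (boolP (i \in toK u l)) => H; rewrite ?andbF ?andbT //.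
apply/bigcupP => -[l' ne]; move: H; rewrite !toKE => /eqP -> /eqP [] e.
by move: ne; rewrite e eqxx.
Qed.

End Labelings.

Section LabelingExtension.
Variables (R : realFieldType) (n k : nat).
Local Notation labeling := {ffun 'I_n -> option 'I_k}.
Local Notation mat := 'M[R]_(n, k).

Definition rowWeight (c : option 'I_k) (x : mat) (i : 'I_n) : R :=
  if c is Some j then x i j else 1 - \sum_(j < k) x i j.

Definition weight (s : labeling) (x : mat) : R := \prod_(i < n) rowWeight (s i) x i.

Definition mlext (h : labeling -> R) (x : mat) : R := \sum_(s : labeling) h s * weight s x.

Definition weightOff (m : 'I_n) (s : labeling) (x : mat) : R :=
  \prod_(i < n | i != m) rowWeight (s i) x i.

Definition rowConst (m : 'I_n) (h : labeling -> R) (x : mat) : R :=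
  \sum_(s : labeling | s m == None) h s * weightOff m s x.

Definition rowSlope (m : 'I_n) (j : 'I_k) (h : labeling -> R) (x : mat) : R :=
  \sum_(s : labeling | s m == None) (h (relabel s m (Some j)) - h s) * weightOff m s x.

Lemma sum_by_label (m : 'I_n) (F : labeling -> R) :
  \sum_(s : labeling) F s =
  \sum_(s : labeling | s m == None) \sum_(c : option 'I_k) F (relabel s m c).
Proof.
rewrite (partition_big (fun s => relabel s m None) (fun s : labeling => s m == None));
  last by move=> s _; rewrite relabel_same.
apply: eq_bigr => t /eqP tm.
rewrite (reindex_onto (relabel t m) (fun s : labeling => s m)); last first.
  by move=> s /eqP <-; rewrite relabel_relabel relabel_id.
apply: eq_bigl => c; rewrite relabel_relabel relabel_same eqxx andbT.
by apply/eqP; rewrite -tm relabel_id.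
Qed.

Lemma sum_option (F : option 'I_k -> R) :
  \sum_(c : option 'I_k) F c = F None + \sum_(j < k) F (Some j).
Proof.
rewrite (bigD1 None) //=; congr (_ + _).
rewrite (reindex_omap (fun j : 'I_k => Some j) id); last by case.
by apply: eq_bigl => j; rewrite eqxx.
Qed.

Lemma weight_split m s x : weight s x = rowWeight (s m) x m * weightOff m s x.
Proof. by rewrite /weight (bigD1 m). Qed.

Lemma weightOff_relabel m s c x : weightOff m (relabel s m c) x = weightOff m s x.
Proof. by apply: eq_bigr => i /negbTE im; rewrite relabelE im. Qed.

Lemma mlext_row_affine m h x :
  mlext h x = rowConst m h x + \sum_(j < k) x m j * rowSlope m j h x.
Proof.
rewrite /mlext (sum_by_label m) /rowConst /rowSlope.
under [X in _ + X]eq_bigr do rewrite mulr_sumr.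
rewrite [X in _ + X]exchange_big /= -big_split /=.
apply: eq_bigr => s /eqP sm; rewrite sum_option.
have -> : relabel s m None = s by rewrite -sm relabel_id.
rewrite (weight_split m) sm /=.
have -> : \sum_(j < k) h (relabel s m (Some j)) * weight (relabel s m (Some j)) x =
          \sum_(j < k) h (relabel s m (Some j)) * (x m j * weightOff m s x).
  by apply: eq_bigr => j _; rewrite (weight_split m) relabel_same weightOff_relabel.
have -> : \sum_(j < k) x m j * ((h (relabel s m (Some j)) - h s) * weightOff m s x) =
          \sum_(j < k) h (relabel s m (Some j)) * (x m j * weightOff m s x)
          - h s * (\sum_(j < k) x m j) * weightOff m s x.
  by rewrite mulr_sumr mulr_suml -sumrB; apply: eq_bigr => j _; ring.
ring.
Qed.

Definition agreeOff (r : 'I_n) (x y : mat) := forall i j, i != r -> x i j = y i j.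

Lemma rowWeight_agreeOff r x y c i :
  agreeOff r x y -> i != r -> rowWeight c x i = rowWeight c y i.
Proof.
move=> xy ir; case: c => [j|] /=; first exact: xy.
by congr (_ - _); apply: eq_bigr => j _; apply: xy.
Qed.

Lemma weightOff_agreeOff r s x y : agreeOff r x y -> weightOff r s x = weightOff r s y.
Proof. by move=> xy; apply: eq_bigr => i ir; rewrite (rowWeight_agreeOff _ xy ir). Qed.

Lemma rowConst_agreeOff r h x y : agreeOff r x y -> rowConst r h x = rowConst r h y.
Proof. by move=> xy; apply: eq_bigr => s _; rewrite (weightOff_agreeOff s xy). Qed.

Lemma rowSlope_agreeOff r j h x y : agreeOff r x y -> rowSlope r j h x = rowSlope r j h y.
Proof. by move=> xy; apply: eq_bigr => s _; rewrite (weightOff_agreeOff s xy). Qed.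

Lemma mlext_row_diff r h x y : agreeOff r x y ->
  mlext h y - mlext h x = \sum_(j < k) (y r j - x r j) * rowSlope r j h x.
Proof.
move=> xy; rewrite (mlext_row_affine r h y) (mlext_row_affine r h x).
rewrite (rowConst_agreeOff h xy) opprD addrACA subrr add0r -sumrB.
by apply: eq_bigr => j _; rewrite (rowSlope_agreeOff _ _ xy) mulrBl.
Qed.

Lemma mlext_shift r j h x t :
  mlext h (x + t *: delta_mx r j) = mlext h x + t * rowSlope r j h x.
Proof.
have xy : agreeOff r x (x + t *: delta_mx r j).
  by move=> i j' ir; rewrite !mxE (negbTE ir) /= mulr0 addr0.
suff <- : mlext h (x + t *: delta_mx r j) - mlext h x = t * rowSlope r j h x.
  by rewrite [RHS]addrC subrK.
rewrite (mlext_row_diff h xy) (bigD1 j) //= big1 ?addr0.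
  by rewrite !mxE !eqxx /= mulr1 addrC addrK.
by move=> j' /negbTE jj; rewrite !mxE jj andbF mulr0 addr0 subrr mul0r.
Qed.

Definition gain (m : 'I_n) (j : 'I_k) (h : labeling -> R) (s : labeling) : R :=
  h (relabel s m (Some j)) - h (relabel s m None).

Lemma rowSlope_mlext m j h x : rowSlope m j h x = mlext (gain m j h) x.
Proof.
rewrite (mlext_row_affine m) big1 ?addr0.
  apply: eq_bigr => s /eqP sm; rewrite /gain.
  by have -> : relabel s m None = s by rewrite -sm relabel_id.
move=> j' _; rewrite /rowSlope big1 ?mulr0 // => s _.
by rewrite /gain !relabel_relabel subrr mul0r.
Qed.

Definition antitone (g : labeling -> R) := forall s t, sublabel s t -> g t <= g s.

(* All row weights nonnegative: the polytope P, written without the bound 1. *)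
Definition feasible (x : mat) := forall i c, 0 <= rowWeight c x i.

Lemma rowSlope_antitone_le0 m j g x : antitone g -> feasible x -> rowSlope m j g x <= 0.
Proof.
move=> ag fx; apply: sumr_le0 => s /eqP sm.
apply: mulr_le0_ge0; last by apply: prodr_ge0 => i _; apply: fx.
rewrite subr_le0; apply: ag => i; rewrite relabelE.
by case: eqP => [->|]; [left|right].
Qed.

Definition mx_le (x y : mat) := forall i j, x i j <= y i j.

Lemma feasible_between x y z : mx_le x y -> mx_le y z -> feasible x -> feasible z ->
  feasible y.
Proof.
move=> xy yz fx fz i [j|] /=; first exact: le_trans (fx i (Some j)) (xy i j).
apply: le_trans (fz i None) _; rewrite lerD2l lerN2; apply: ler_sum => j _; exact: yz.
Qed.

Definition hybrid (N : nat) (x y : mat) : mat :=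
  \matrix_(i, j) if (i < N)%N then y i j else x i j.

Lemma hybrid_between N x y : mx_le x y -> mx_le x (hybrid N x y) /\ mx_le (hybrid N x y) y.
Proof. by move=> xy; split=> i j; rewrite mxE; case: ifP. Qed.

Lemma hybrid_mono N x1 y1 x2 y2 : mx_le x1 x2 -> mx_le y1 y2 ->
  mx_le (hybrid N x1 y1) (hybrid N x2 y2).
Proof. by move=> H1 H2 i j; rewrite !mxE; case: ifP. Qed.

Lemma hybrid_succ N x y (lt_N : (N < n)%N) :
  agreeOff (Ordinal lt_N) (hybrid N x y) (hybrid N.+1 x y).
Proof.
move=> i j ne; rewrite !mxE ltnS [(i <= N)%N]leq_eqVlt.
suff /negbTE -> : (i : nat) != N by [].
by apply: contra ne => /eqP e; apply/eqP/val_inj.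
Qed.

Lemma mlext_telescope_prefix h x y N : (N <= n)%N ->
  mlext h (hybrid N x y) - mlext h x =
  \sum_(m : 'I_n | (m < N)%N) \sum_(j < k) (y m j - x m j) * rowSlope m j h (hybrid m x y).
Proof.
elim: N => [|N IH] leN.
  have -> : hybrid 0 x y = x by apply/matrixP => i j; rewrite mxE.
  by rewrite subrr big_pred0.
pose m0 := Ordinal leN.
rewrite -[LHS](subrKA (mlext h (hybrid N x y))) (mlext_row_diff h (@hybrid_succ N x y leN)).
rewrite (IH (ltnW leN)) [RHS](bigD1 m0) /=; last by rewrite ltnSn.
congr (_ + _); first by apply: eq_bigr => j _; rewrite !mxE /= ltnSn ltnn.
apply: eq_bigl => i; rewrite ltnS -val_eqE /= ltn_neqAle.
exact: andbC.
Qed.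

Lemma mlext_telescope h x y : mlext h y - mlext h x =
  \sum_(m : 'I_n) \sum_(j < k) (y m j - x m j) * rowSlope m j h (hybrid m x y).
Proof.
have -> : y = hybrid n x y by apply/matrixP => i j; rewrite mxE ltn_ord.
rewrite (mlext_telescope_prefix h x y (leqnn n)).
apply: eq_big => [m|m _]; first by rewrite ltn_ord.
apply: eq_bigr => j _; congr (_ * _); first by rewrite !mxE ltn_ord.
by congr (rowSlope _ _ _ _); apply/matrixP => i j'; rewrite !mxE ltn_ord; case: ifP.
Qed.

Lemma mlext_antitone g x y : antitone g -> feasible x -> feasible y -> mx_le x y ->
  mlext g y <= mlext g x.
Proof.
move=> ag fx fy xy; rewrite -subr_le0 mlext_telescope.
apply: sumr_le0 => m _; apply: sumr_le0 => j _.
apply: mulr_ge0_le0; first by rewrite subr_ge0.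
apply: rowSlope_antitone_le0 => //.
by have [H1 H2] := hybrid_between m xy; exact: feasible_between H1 H2 fx fy.
Qed.

Definition chordSlope h (x d : mat) (p q : R) : R :=
  \sum_(m : 'I_n) \sum_(j < k) d m j * rowSlope m j h (hybrid m (x + p *: d) (x + q *: d)).

Lemma mlext_chord h x d p q :
  mlext h (x + q *: d) - mlext h (x + p *: d) = (q - p) * chordSlope h x d p q.
Proof.
rewrite mlext_telescope mulr_sumr; apply: eq_bigr => m _; rewrite mulr_sumr.
by apply: eq_bigr => j _; rewrite !mxE; ring.
Qed.

Lemma line_mx_le (x d : mat) (p q : R) : (forall i j, 0 <= d i j) -> p <= q ->
  mx_le (x + p *: d) (x + q *: d).
Proof. by move=> d_ge0 pq i j; rewrite !mxE lerD2l ler_wpM2r. Qed.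

Lemma chordSlope_antitone h (x d : mat) (a c b : R) :
  (forall m j, antitone (gain m j h)) -> (forall i j, 0 <= d i j) ->
  feasible (x + a *: d) -> feasible (x + b *: d) -> a <= c -> c <= b ->
  chordSlope h x d c b <= chordSlope h x d a c.
Proof.
move=> gain_anti d_ge0 fa fb ac cb.
have le_ac := line_mx_le x d_ge0 ac; have le_cb := line_mx_le x d_ge0 cb.
have fhyb N p q : mx_le (x + a *: d) (x + p *: d) -> mx_le (x + q *: d) (x + b *: d) ->
    mx_le (x + p *: d) (x + q *: d) -> feasible (hybrid N (x + p *: d) (x + q *: d)).
  move=> le_ap le_qb le_pq; have [H1 H2] := hybrid_between N le_pq.
  apply: feasible_between fa fb => i j.
    exact: le_trans (le_ap i j) (H1 i j).
  exact: le_trans (H2 i j) (le_qb i j).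
apply: ler_sum => m _; apply: ler_sum => j _.
apply: ler_wpM2l; first exact: d_ge0.
rewrite !rowSlope_mlext; apply: mlext_antitone; first exact: gain_anti.
- by apply: fhyb => // i j'; apply: le_trans (le_ac i j') (le_cb i j').
- by apply: fhyb => // i j'; apply: le_trans (le_ac i j') (le_cb i j').
- exact: hybrid_mono.
Qed.

Lemma mlext_concave_line h (x d : mat) (a b l : R) :
  (forall m j, antitone (gain m j h)) -> (forall i j, 0 <= d i j) ->
  feasible (x + a *: d) -> feasible (x + b *: d) -> 0 <= l <= 1 ->
  (1 - l) * mlext h (x + a *: d) + l * mlext h (x + b *: d) <=
  mlext h (x + ((1 - l) * a + l * b) *: d).
Proof.
move=> gain_anti d_ge0.
wlog ab : a b l / a <= b => [wlog_ab|] fa fb /andP [l0 l1].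
  case: (lerP a b) => [ab|/ltW ba]; first by apply: wlog_ab => //; apply/andP.
  have := wlog_ab b a (1 - l) ba fb fa; rewrite subKr.
  rewrite [X in _ <= mlext h (x + X *: d)]addrC [X in _ -> X <= _]addrC.
  by apply; apply/andP; split; lra.
set c := (1 - l) * a + l * b.
have ac : a <= c by rewrite /c; nra.
have cb : c <= b by rewrite /c; nra.
have slopes := chordSlope_antitone gain_anti d_ge0 fa fb ac cb.
have Eac := mlext_chord h x d a c; have Ecb := mlext_chord h x d c b.
rewrite -subr_ge0.
have -> : mlext h (x + c *: d) - ((1 - l) * mlext h (x + a *: d) + l * mlext h (x + b *: d))
    = (1 - l) * (mlext h (x + c *: d) - mlext h (x + a *: d))
      - l * (mlext h (x + b *: d) - mlext h (x + c *: d)) by ring.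
rewrite Eac Ecb.
have -> : (1 - l) * ((c - a) * chordSlope h x d a c) - l * ((b - c) * chordSlope h x d c b)
    = (l * (1 - l) * (b - a)) * (chordSlope h x d a c - chordSlope h x d c b).
  by rewrite /c; ring.
apply: mulr_ge0; last by rewrite subr_ge0.
by apply: mulr_ge0; [apply: mulr_ge0|]; rewrite ?subr_ge0.
Qed.

Lemma mlext_exchange_line h (x : mat) (i1 i2 : 'I_n) (j1 j2 : 'I_k) (t : R) :
  mlext h (x + t *: (delta_mx i1 j1 - delta_mx i2 j2)) =
  mlext h x + (mlext (gain i1 j1 h) x - rowSlope i2 j2 h x) * t
  + (- rowSlope i2 j2 (gain i1 j1 h) x) * t ^+ 2.
Proof.
have -> : x + t *: (delta_mx i1 j1 - delta_mx i2 j2) =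
    (x + (- t) *: delta_mx i2 j2) + t *: delta_mx i1 j1.
  by apply/matrixP => p q; rewrite !mxE; ring.
rewrite mlext_shift (rowSlope_mlext i1 j1) !mlext_shift; ring.
Qed.

Lemma quadratic_convex (A B c a b l : R) : 0 <= c -> 0 <= l <= 1 ->
  A + B * ((1 - l) * a + l * b) + c * ((1 - l) * a + l * b) ^+ 2 <=
  (1 - l) * (A + B * a + c * a ^+ 2) + l * (A + B * b + c * b ^+ 2).
Proof.
move=> c_ge0 /andP [l0 l1]; rewrite -subr_ge0.
have -> : (1 - l) * (A + B * a + c * a ^+ 2) + l * (A + B * b + c * b ^+ 2) -
    (A + B * ((1 - l) * a + l * b) + c * ((1 - l) * a + l * b) ^+ 2) =
    c * (l * (1 - l)) * (a - b) ^+ 2 by ring.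
by rewrite mulr_ge0 ?sqr_ge0 // mulr_ge0 // mulr_ge0 ?subr_ge0.
Qed.

End LabelingExtension.

Section KSubmodularExtension.
Variables (R : realType) (n k : nat).
Local Notation labeling := {ffun 'I_n -> option 'I_k}.
Local Notation mat := 'M[R]_(n, k).

Definition onLabels (f : ktuple n k -> R) (s : labeling) : R := f (toK s).

Lemma multilinF_mlext (f : ktuple n k -> R) (x : mat) :
  multilinF f x = mlext (onLabels f) x.
Proof.
rewrite /multilinF (reindex_onto (@toK n k) (@ofK n k)); last exact: toK_ofK.
apply: eq_big => [s|s _]; first by rewrite toK_disjoint ofK_toK eqxx.
rewrite -mulrA; congr (_ * _).
have labeled : \prod_(j < k) \prod_(i in toK s j) x i j =
    \prod_(i < n) (if s i is Some j then x i j else 1).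
  under eq_bigr do rewrite big_mkcond /=.
  rewrite exchange_big /=; apply: eq_bigr => i _.
  under eq_bigr do rewrite toKE.
  case: (s i) => [j0|]; last by rewrite big1.
  rewrite (bigD1 j0) //= eqxx big1 ?mulr1 // => j ne.
  by case: eqP => // -[] e; move: ne; rewrite e eqxx.
have unlabeled :
    \prod_(i < n | i \notin \bigcup_(j < k) toK s j) (1 - \sum_(j < k) x i j) =
    \prod_(i < n) (if s i is None then 1 - \sum_(j < k) x i j else 1).
  rewrite big_mkcond /=; apply: eq_bigr => i _.
  have -> : (i \in \bigcup_(j < k) toK s j) = (s i != None).
    apply/bigcupP/idP => [[j _]|]; first by rewrite toKE => /eqP ->.
    by case E: (s i) => [j|] // _; exists j; rewrite ?toKE ?E.
  by case: (s i).
rewrite labeled unlabeled -big_split /=; apply: eq_bigr => i _.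
by case: (s i) => [j|] /=; rewrite ?mulr1 ?mul1r.
Qed.

Lemma gain_antitone (f : ktuple n k -> R) m j : k_submodular f ->
  antitone (gain m j (onLabels f)).
Proof.
move=> fsub s t le_st; rewrite /gain /onLabels.
set s0 := relabel s m None; set t0 := relabel t m None.
have le0 : sublabel s0 t0.
  by move=> i; rewrite !relabelE; case: (i == m); [left|apply: le_st].
have [meetE joinE] := kmeet_kjoin_relabel j le0 (relabel_same t m None).
have := fsub _ _ (toK_disjoint (relabel s0 m (Some j))) (toK_disjoint t0).
by rewrite meetE joinE !relabel_relabel; lra.
Qed.

Lemma derive1_affine (a b : R) : derive1 (fun t : R => a + t * b) 0 = b.
Proof.
rewrite derive1E.
have -> : (fun t : R => a + t * b) = cst a + (fun t => b * id t).
  by apply/funext => t /=; rewrite mulrC.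
by rewrite deriveD // derive_cst add0r deriveMl // derive_id mulr1.
Qed.

Lemma partialF_rowSlope (f : ktuple n k -> R) i j (x : mat) :
  partialF f i j x = rowSlope i j (onLabels f) x.
Proof.
rewrite /partialF.
under eq_fun do rewrite multilinF_mlext mlext_shift.
exact: derive1_affine.
Qed.

Lemma inP_feasible (x : mat) : inP x -> feasible x.
Proof. by case=> x01 row_le1 i [j|] /=; [case/andP: (x01 i j) | rewrite subr_ge0]. Qed.

End KSubmodularExtension.

Theorem mainTheorem3 (R : realType) (n k : nat) (f : ktuple n k -> R) :
  (0 < k)%N ->
  k_submodular f ->
  (* (1) concavity along nonnegative directions *)
  (forall (x d : 'M[R]_(n, k)), inP x -> (forall i j, 0 <= d i j) ->
     concave_on (fun t => inP (x + t *: d)) (fun t => multilinF f (x + t *: d)))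
  /\
  (* (2) convexity along e_{i1,j1} - e_{i2,j2}, i1 <> i2 *)
  (forall (x : 'M[R]_(n, k)) (i1 i2 : 'I_n) (j1 j2 : 'I_k), inP x -> i1 != i2 ->
     let d := delta_mx i1 j1 - delta_mx i2 j2 in
     convex_on (fun t => inP (x + t *: d)) (fun t => multilinF f (x + t *: d)))
  /\
  (* (3) dF/dx_{i,j} does not depend on x_{i,1},...,x_{i,k} *)
  (forall (i : 'I_n) (j : 'I_k) (x y : 'M[R]_(n, k)),
     (forall (i' : 'I_n) (j' : 'I_k), i' != i -> x i' j' = y i' j') ->
     partialF f i j x = partialF f i j y)
  /\
  (* (4) antitone gradient on P *)
  (forall (x y : 'M[R]_(n, k)), inP x -> inP y -> (forall i j, x i j <= y i j) ->
     forall (i : 'I_n) (j : 'I_k), partialF f i j y <= partialF f i j x).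
Proof.
move=> _ fsub; have gains_anti m j := gain_antitone m j fsub.
split.
  move=> x d _ d_ge0 a b l Pa Pb l01; rewrite !multilinF_mlext.
  exact: mlext_concave_line gains_anti d_ge0 (inP_feasible Pa) (inP_feasible Pb) l01.
split.
  move=> x i1 i2 j1 j2 Px _ d a b l _ _ l01; rewrite /d !multilinF_mlext !mlext_exchange_line.
  apply: quadratic_convex l01; rewrite oppr_ge0.
  exact: rowSlope_antitone_le0 (gains_anti _ _) (inP_feasible Px).
split.
  by move=> i j x y xy; rewrite !partialF_rowSlope; apply: rowSlope_agreeOff.
move=> x y Px Py xy i j; rewrite !partialF_rowSlope !rowSlope_mlext.
exact: mlext_antitone (gains_anti i j) (inP_feasible Px) (inP_feasible Py) xy.
Qed.
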